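(* For all level expressions $l_1, l_2$: $l_1 \simeq l_2$ if and only if $[\![ l_1 ]\!]_\sigma = [\![ l_2 ]\!]_\sigma$ for every function $\sigma : \mathcal{I} \to \mathbb{N}$.
   Context: Level expressions are generated by the grammar $l ::= i \mid \mathtt{z} \mid \mathtt{s}\,l \mid l \sqcup l'$, where $i$ ranges over an infinite set $\mathcal{I}$ of level variables. The relation $\simeq$ is the smallest congruence on level expressions (reflexive, symmetric, transitive, closed under the constructors $\mathtt{s}$ and $\sqcup$, and closed under substitution of level expressions for level variables) containing the equations $i_1 \sqcup (i_2 \sqcup i_3) \approx (i_1 \sqcup i_2) \sqcup i_3$, $i_1 \sqcup i_2 \approx i_2 \sqcup i_1$, $\mathtt{s}\,(i_1 \sqcup i_2) \approx \mathtt{s}\,i_1 \sqcup \mathtt{s}\,i_2$, $i \sqcup \mathtt{s}\,i \approx \mathtt{s}\,i$, $i \sqcup \mathtt{z} \approx i$, $i \sqcup i \approx i$ (for level variables $i, i_1, i_2, i_3$). Given $\sigma : \mathcal{I} \to \mathbb{N}$, the interpretation $[\![ l ]\!]_\sigma \in \mathbb{N}$ is defined by $[\![ i ]\!]_\sigma = \sigma(i)$, $[\![ \mathtt{z} ]\!]_\sigma = 0$, $[\![ \mathtt{s}\,l ]\!]_\sigma = [\![ l ]\!]_\sigma + 1$, $[\![ l \sqcup l' ]\!]_\sigma = \max([\![ l ]\!]_\sigma, [\![ l' ]\!]_\sigma)$. *)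

From Stdlib Require Import Arith.

(* Level variables: the infinite set I is taken to be nat. *)
Definition lvar := nat.

Inductive level : Type :=
| LVar : lvar -> level
| LZ : level
| LS : level -> level
| LMax : level -> level -> level.

Fixpoint subst (s : lvar -> level) (l : level) : level :=
  match l with
  | LVar i => s i
  | LZ => LZ
  | LS l' => LS (subst s l')
  | LMax a b => LMax (subst s a) (subst s b)
  end.

Inductive level_ax : level -> level -> Prop :=
| ax_assoc i1 i2 i3 :
    level_ax (LMax (LVar i1) (LMax (LVar i2) (LVar i3)))
             (LMax (LMax (LVar i1) (LVar i2)) (LVar i3))
| ax_comm i1 i2 : level_ax (LMax (LVar i1) (LVar i2)) (LMax (LVar i2) (LVar i1))
| ax_sdist i1 i2 :
    level_ax (LS (LMax (LVar i1) (LVar i2))) (LMax (LS (LVar i1)) (LS (LVar i2)))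
| ax_sabs i : level_ax (LMax (LVar i) (LS (LVar i))) (LS (LVar i))
| ax_zero i : level_ax (LMax (LVar i) LZ) (LVar i)
| ax_idem i : level_ax (LMax (LVar i) (LVar i)) (LVar i).

Inductive level_eq : level -> level -> Prop :=
| leq_ax l1 l2 : level_ax l1 l2 -> level_eq l1 l2
| leq_refl l : level_eq l l
| leq_sym l1 l2 : level_eq l1 l2 -> level_eq l2 l1
| leq_trans l1 l2 l3 : level_eq l1 l2 -> level_eq l2 l3 -> level_eq l1 l3
| leq_S l1 l2 : level_eq l1 l2 -> level_eq (LS l1) (LS l2)
| leq_max l1 l1' l2 l2' :
    level_eq l1 l1' -> level_eq l2 l2' -> level_eq (LMax l1 l2) (LMax l1' l2')
| leq_subst (s : lvar -> level) l1 l2 :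
    level_eq l1 l2 -> level_eq (subst s l1) (subst s l2).

Fixpoint interp (sigma : lvar -> nat) (l : level) : nat :=
  match l with
  | LVar i => sigma i
  | LZ => 0
  | LS l' => S (interp sigma l')
  | LMax a b => Nat.max (interp sigma a) (interp sigma b)
  end.

(* For completeness, every level
   is provably equal to a normal form: the join of its "atoms" S^k i and S^k z.
   An atom below a join in every valuation is dominated by one of the join's
   atoms (same variable or z, no larger offset): valuating its variable far
   above every offset of the join forces this.  Domination is provable, so
   semantically equal normal forms are provably below each other. *)

From Stdlib Require Import Arith Lia List Setoid Morphisms.
Import ListNotations.

Infix "≃" := level_eq (at level 70).

#[export] Instance level_eq_Equivalence : Equivalence level_eq.
Proof. split; [exact leq_refl | exact leq_sym | exact leq_trans]. Qed.

#[export] Instance LS_Proper : Proper (level_eq ==> level_eq) LS.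
Proof. exact leq_S. Qed.

#[export] Instance LMax_Proper : Proper (level_eq ==> level_eq ==> level_eq) LMax.
Proof. intros a a' Ha b b' Hb; exact (leq_max _ _ _ _ Ha Hb). Qed.

Definition subst3 (a b c : level) : lvar -> level :=
  fun i => match i with 0 => a | 1 => b | _ => c end.

Lemma max_assoc a b c : LMax a (LMax b c) ≃ LMax (LMax a b) c.
Proof. exact (leq_subst (subst3 a b c) _ _ (leq_ax _ _ (ax_assoc 0 1 2))). Qed.

Lemma max_comm a b : LMax a b ≃ LMax b a.
Proof. exact (leq_subst (subst3 a b a) _ _ (leq_ax _ _ (ax_comm 0 1))). Qed.

Lemma succ_max a b : LS (LMax a b) ≃ LMax (LS a) (LS b).
Proof. exact (leq_subst (subst3 a b a) _ _ (leq_ax _ _ (ax_sdist 0 1))). Qed.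

Lemma max_succ_absorb a : LMax a (LS a) ≃ LS a.
Proof. exact (leq_subst (subst3 a a a) _ _ (leq_ax _ _ (ax_sabs 0))). Qed.

Lemma max_zero_r a : LMax a LZ ≃ a.
Proof. exact (leq_subst (subst3 a a a) _ _ (leq_ax _ _ (ax_zero 0))). Qed.

Lemma max_idem a : LMax a a ≃ a.
Proof. exact (leq_subst (subst3 a a a) _ _ (leq_ax _ _ (ax_idem 0))). Qed.

Lemma max_zero_l a : LMax LZ a ≃ a.
Proof. now rewrite max_comm, max_zero_r. Qed.

Lemma max_swap_l a b c : LMax a (LMax b c) ≃ LMax b (LMax a c).
Proof. now rewrite max_assoc, (max_comm a b), <- max_assoc. Qed.

#[export] Instance iter_succ_Proper n : Proper (level_eq ==> level_eq) (Nat.iter n LS).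
Proof. induction n as [|n IH]; intros a b Hab; simpl; [exact Hab | now rewrite (IH a b Hab)]. Qed.

Lemma iter_succ_max n a b :
  Nat.iter n LS (LMax a b) ≃ LMax (Nat.iter n LS a) (Nat.iter n LS b).
Proof.
  induction n as [|n IH]; simpl; [reflexivity|].
  now rewrite IH, succ_max.
Qed.

Lemma max_iter_succ_absorb n a : LMax a (Nat.iter n LS a) ≃ Nat.iter n LS a.
Proof.
  induction n as [|n IH]; simpl; [apply max_idem|].
  rewrite <- (max_succ_absorb (Nat.iter n LS a)) at 1.
  now rewrite max_assoc, IH, max_succ_absorb.
Qed.

Definition level_le (a b : level) : Prop := LMax a b ≃ b.

Lemma level_le_trans a b c : level_le a b -> level_le b c -> level_le a c.
Proof.
  unfold level_le; intros Hab Hbc.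
  now rewrite <- Hbc, max_assoc, Hab.
Qed.

Lemma level_le_antisym a b : level_le a b -> level_le b a -> a ≃ b.
Proof.
  unfold level_le; intros Hab Hba.
  now rewrite <- Hba, max_comm.
Qed.

(* [(Some i, k)] stands for [S^k i] and [(None, k)] for [S^k z]. *)
Definition atom : Type := (option lvar * nat)%type.

Definition atom_base (o : option lvar) : level :=
  match o with Some i => LVar i | None => LZ end.

Definition atom_level (a : atom) : level := Nat.iter (snd a) LS (atom_base (fst a)).

Fixpoint join (A : list atom) : level :=
  match A with
  | [] => LZ
  | a :: A' => LMax (atom_level a) (join A')
  end.

Definition succ_atom (a : atom) : atom := (fst a, S (snd a)).

Fixpoint atoms (l : level) : list atom :=
  match l with
  | LVar i => [(Some i, 0)]
  | LZ => [(None, 0)]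
  | LS l' => map succ_atom (atoms l')
  | LMax a b => atoms a ++ atoms b
  end.

Lemma atoms_nonempty l : atoms l <> [].
Proof.
  induction l as [| |l IH|l1 IH1 l2 _]; simpl; try discriminate.
  - now destruct (atoms l).
  - now destruct (atoms l1).
Qed.

Lemma join_app A B : join (A ++ B) ≃ LMax (join A) (join B).
Proof.
  induction A as [|a A IH]; simpl.
  - now rewrite max_zero_l.
  - now rewrite IH, max_assoc.
Qed.

(* Nonemptiness matters: [LS (join [])] is [LS LZ], not [LZ]. *)
Lemma succ_join A : A <> [] -> LS (join A) ≃ join (map succ_atom A).
Proof.
  intros HA; destruct A as [|a A]; [contradiction|]; clear HA.
  revert a; induction A as [|b A IH]; intros a; simpl in *.
  - now rewrite !max_zero_r.
  - now rewrite succ_max, IH.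
Qed.

Lemma level_eq_join_atoms l : l ≃ join (atoms l).
Proof.
  induction l as [i| |l IH|l1 IH1 l2 IH2]; simpl.
  - now rewrite max_zero_r.
  - now rewrite max_zero_r.
  - now rewrite IH at 1; apply succ_join, atoms_nonempty.
  - now rewrite IH1 at 1; rewrite IH2 at 1; rewrite join_app.
Qed.

Lemma atom_le_join a A : In a A -> level_le (atom_level a) (join A).
Proof.
  unfold level_le; induction A as [|b A IH]; simpl; [contradiction|].
  intros [-> | HA].
  - now rewrite max_assoc, max_idem.
  - now rewrite max_swap_l, IH.
Qed.

Lemma join_le A J : (forall a, In a A -> level_le (atom_level a) J) -> level_le (join A) J.
Proof.
  unfold level_le; induction A as [|a A IH]; simpl; intros HA.
  - apply max_zero_l.
  - rewrite <- max_assoc, IH by auto. auto.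
Qed.

Definition dominated (a b : atom) : Prop :=
  snd a <= snd b /\ (fst a = None \/ fst a = fst b).

Lemma dominated_level_le a b : dominated a b -> level_le (atom_level a) (atom_level b).
Proof.
  destruct a as [o k], b as [o' k']; unfold dominated, level_le, atom_level; simpl.
  intros [Hk Ho].
  replace k' with (k + (k' - k)) by lia.
  rewrite Nat.iter_add, <- iter_succ_max.
  destruct Ho as [-> | ->].
  - now rewrite max_zero_l.
  - now rewrite max_iter_succ_absorb.
Qed.

Lemma interp_subst sg s l :
  interp sg (subst s l) = interp (fun i => interp sg (s i)) l.
Proof. induction l; simpl; auto. Qed.

Lemma interp_sound l1 l2 : l1 ≃ l2 -> forall sg, interp sg l1 = interp sg l2.
Proof.
  induction 1 as [l1 l2 Hax| | | | | |s l1 l2 _ IH]; intros sg; simpl;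
    try (destruct Hax; simpl; lia); try congruence.
  now rewrite !interp_subst.
Qed.

Definition atom_value (sg : lvar -> nat) (a : atom) : nat :=
  snd a + match fst a with Some i => sg i | None => 0 end.

Lemma interp_atom sg a : interp sg (atom_level a) = atom_value sg a.
Proof.
  destruct a as [o k]; unfold atom_level, atom_value; simpl.
  induction k as [|k IH]; simpl; [now destruct o|].
  rewrite IH; lia.
Qed.

Lemma atom_value_le_join sg a A : In a A -> atom_value sg a <= interp sg (join A).
Proof.
  induction A as [|b A IH]; simpl; [contradiction|].
  rewrite interp_atom; intros [-> | HA]; [lia|].
  specialize (IH HA); lia.
Qed.

Lemma join_attained sg A :
  A <> [] -> exists b, In b A /\ interp sg (join A) = atom_value sg b.
Proof.
  induction A as [|a A IH]; intros HA; [contradiction|]; simpl.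
  rewrite interp_atom.
  destruct A as [|c A].
  - exists a; simpl; split; [auto | lia].
  - destruct IH as [b [Hb Hval]]; [discriminate|].
    rewrite Hval.
    destruct (Nat.le_ge_cases (atom_value sg a) (atom_value sg b)).
    + exists b; split; [now right | lia].
    + exists a; split; [now left | lia].
Qed.

Lemma dominated_of_interp_le a B :
  B <> [] ->
  (forall sg, atom_value sg a <= interp sg (join B)) ->
  exists b, In b B /\ dominated a b.
Proof.
  intros HB Hle.
  destruct a as [[i|] k].
  - (* Valuate [i] above every offset of [B]: only atoms based on [i] can reach it. *)
    set (M := S (interp (fun _ => 0) (join B))).
    set (sg := fun j => if Nat.eqb j i then M else 0).
    destruct (join_attained sg B HB) as [[o' k'] [Hb Hval]].
    exists (o', k'); split; [exact Hb|].
    specialize (Hle sg); rewrite Hval in Hle.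
    pose proof (atom_value_le_join (fun _ => 0) _ _ Hb) as Hoffset.
    unfold atom_value, sg, dominated in *; simpl in *.
    rewrite Nat.eqb_refl in Hle.
    destruct o' as [j|]; [destruct (Nat.eqb_spec j i) as [-> | _]|].
    + split; [lia | now right].
    + lia.
    + lia.
  - destruct (join_attained (fun _ => 0) B HB) as [[o' k'] [Hb Hval]].
    exists (o', k'); split; [exact Hb|].
    specialize (Hle (fun _ => 0)); rewrite Hval in Hle.
    unfold atom_value, dominated in *; simpl in *.
    split; [destruct o'; lia | now left].
Qed.

Lemma join_le_of_interp_le A B :
  B <> [] ->
  (forall sg, interp sg (join A) <= interp sg (join B)) ->
  level_le (join A) (join B).
Proof.
  intros HB Hle. apply join_le; intros a Ha.
  destruct (dominated_of_interp_le a B HB) as [b [Hb Hab]].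
  - intros sg. rewrite <- Hle. now apply atom_value_le_join.
  - eapply level_le_trans; [apply dominated_level_le, Hab | apply atom_le_join, Hb].
Qed.

Theorem mainTheorem1 (l1 l2 : level) :
  level_eq l1 l2 <-> (forall sigma : lvar -> nat, interp sigma l1 = interp sigma l2).
Proof.
  split; [apply interp_sound|].
  intros Hsem.
  assert (Hnf : forall sg, interp sg (join (atoms l1)) = interp sg (join (atoms l2))).
  { intros sg. now rewrite <- !(interp_sound _ _ (level_eq_join_atoms _)). }
  rewrite (level_eq_join_atoms l1), (level_eq_join_atoms l2).
  apply level_le_antisym; apply join_le_of_interp_le;
    try apply atoms_nonempty; intros sg; rewrite Hnf; lia.
Qed.
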